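(* Let $X$ be a reflexive complex Banach space, let $(\Omega,\mathcal{A},\mu)$ be a probability space, and let $\xi:\Omega\to X$ be weakly measurable, possessing a weak (Pettis) expectation with $\mathrm{E}\,\xi=\int_\Omega\xi\,d\mu=0$. Suppose that $D=\{f\in X^\ast:\int_\Omega|f(\xi)|^2\,d\mu<+\infty\}$ is dense in $X^\ast$, and define $t(f,g)=\mathrm{E}\big(f(\xi)\overline{g(\xi)}\big)=\int_\Omega f(\xi)\overline{g(\xi)}\,d\mu$ for $f,g\in D$. Then $t$ is a positive, closed, sesquilinear form on $D\times D$.
   Context: $X^\ast$ denotes the space of continuous conjugate-linear functionals on $X$. A positive sesquilinear form $t$ on a subspace $D$ of a normed space $Y$ (here $Y=X^\ast$) is called closed if whenever $f_n\in D$, $f_n\to f$ in $Y$ and $t(f_n-f_m,f_n-f_m)\to0$ as $n,m\to\infty$, then $f\in D$ and $t(f_n-f,f_n-f)\to0$. *)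

From HB Require Import structures.
From mathcomp Require Import all_boot all_order all_algebra.
From mathcomp Require Import complex.
From mathcomp Require Import all_classical all_reals all_analysis.
Set Implicit Arguments. Unset Strict Implicit. Unset Printing Implicit Defensive.
Import Order.TTheory GRing.Theory Num.Theory.
Import numFieldNormedType.Exports.
Local Open Scope ring_scope.
Local Open Scope classical_set_scope.

Section Dual.
Context {R : realType} {X : normedModType R[i]}.

Definition conj_linear (f : X -> R[i]) : Prop :=
  (forall x y : X, f (x + y) = f x + f y) /\
  (forall (a : R[i]) (x : X), f (a *: x) = conjc a * f x).

(* membership in X^* : continuous conjugate-linear functionals *)
Definition in_dual (f : X -> R[i]) : Prop :=
  conj_linear f /\ continuous (f : X -> R[i]^o).

Definition dual_norm_le (f : X -> R[i]) (M : R[i]) : Prop :=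
  forall x : X, `|x| <= 1 -> `|f x| <= M.

Definition dscale (a : R[i]) (f : X -> R[i]) : X -> R[i] := fun x => a * f x.
Definition dadd (f g : X -> R[i]) : X -> R[i] := fun x => f x + g x.
Definition dsub (f g : X -> R[i]) : X -> R[i] := fun x => f x - g x.

Definition dual_cvg (F : nat -> X -> R[i]) (f : X -> R[i]) : Prop :=
  forall e : R[i], 0 < e -> exists N : nat, forall n : nat, (N <= n)%N ->
    dual_norm_le (dsub (F n) f) e.

Definition in_bidual (phi : (X -> R[i]) -> R[i]) : Prop :=
  (forall f g, in_dual f -> in_dual g -> phi (dadd f g) = phi f + phi g) /\
  (forall a f, in_dual f -> phi (dscale a f) = conjc a * phi f) /\
  (forall f, in_dual f -> forall e : R[i], 0 < e -> exists d : R[i], 0 < d /\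
     forall g, in_dual g -> dual_norm_le (dsub g f) d -> `|phi g - phi f| <= e).

(* reflexivity: the canonical map x |-> (f |-> conj (f x)) of X into the bidual
   is onto *)
Definition reflexive_space : Prop :=
  forall phi, in_bidual phi ->
    exists x : X, forall f, in_dual f -> phi f = conjc (f x).

Definition dual_subspace (D : set (X -> R[i])) : Prop :=
  (forall f, D f -> in_dual f) /\ D (fun _ => 0) /\
  (forall a f g, D f -> D g -> D (dadd (dscale a f) g)).

Definition sesquilinear_on (D : set (X -> R[i]))
    (t : (X -> R[i]) -> (X -> R[i]) -> R[i]) : Prop :=
  (forall a f g h, D f -> D g -> D h ->
     t (dadd (dscale a f) g) h = a * t f h + t g h) /\
  (forall a f g h, D f -> D g -> D h ->
     t h (dadd (dscale a f) g) = conjc a * t h f + t h g).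

Definition positive_on (D : set (X -> R[i]))
    (t : (X -> R[i]) -> (X -> R[i]) -> R[i]) : Prop :=
  forall f, D f -> 0 <= t f f.

Definition closed_form_on (D : set (X -> R[i]))
    (t : (X -> R[i]) -> (X -> R[i]) -> R[i]) : Prop :=
  forall (F : nat -> X -> R[i]) (f : X -> R[i]),
    (forall n, D (F n)) -> in_dual f -> dual_cvg F f ->
    (forall e : R[i], 0 < e -> exists N : nat, forall n m : nat,
        (N <= n)%N -> (N <= m)%N ->
        `|t (dsub (F n) (F m)) (dsub (F n) (F m))| <= e) ->
    D f /\
    (forall e : R[i], 0 < e -> exists N : nat, forall n : nat, (N <= n)%N ->
        `|t (dsub (F n) f) (dsub (F n) f)| <= e).

End Dual.

Section ComplexIntegration.
Context {d : measure_display} {T : measurableType d} {R : realType}.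

Definition cmeasurable (h : T -> R[i]) : Prop :=
  measurable_fun setT (fun w => complex.Re (h w)) /\
  measurable_fun setT (fun w => complex.Im (h w)).

Definition cintegrable (mu : {measure set T -> \bar R}) (h : T -> R[i]) : Prop :=
  mu.-integrable setT (fun w => (complex.Re (h w))%:E) /\
  mu.-integrable setT (fun w => (complex.Im (h w))%:E).

Definition cintegral (mu : {measure set T -> \bar R}) (h : T -> R[i]) : R[i] :=
  Complex (Rintegral mu setT (fun w => complex.Re (h w)))
          (Rintegral mu setT (fun w => complex.Im (h w))).

End ComplexIntegration.

(* The map f |-> f(xi) sends D into L^2(P), and t(f, g) is the L^2 inner
   product of f(xi) and g(xi), so t inherits sesquilinearity and positivity
   from the integral.  Closedness is the completeness argument for L^2:
   convergence in X^* gives f_n(xi(w)) -> f(xi(w)) for every w, and Fatou's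
   lemma applied to |f_n(xi) - f_m(xi)|^2 as m -> oo turns the t-Cauchy
   property into int |f_n(xi) - f(xi)|^2 -> 0, which also puts f(xi) in L^2. *)

From Pilot Require Import Defs.
From HB Require Import structures.
From mathcomp Require Import all_boot all_order all_algebra.
From mathcomp Require Import complex.
From mathcomp Require Import all_classical all_reals all_analysis.
From mathcomp Require Import measurable_realfun.
From mathcomp Require Import ring lra.
Import Order.TTheory GRing.Theory Num.Theory.
Import numFieldNormedType.Exports.
Local Open Scope ring_scope.
Local Open Scope classical_set_scope.

Local Notation Re := complex.Re.
Local Notation Im := complex.Im.

Section SquaredModulus.
Context {R : rcfType}.
Implicit Types z w a : R[i].
Local Open Scope complex_scope.

Definition sqnormc z : R := Re z ^+ 2 + Im z ^+ 2.

Lemma sqnormc_ge0 z : 0 <= sqnormc z.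
Proof. by rewrite addr_ge0 ?sqr_ge0. Qed.

Lemma Re_sqr_normc z : Re (`|z| ^+ 2) = sqnormc z.
Proof. by rewrite -add_Re2_Im2. Qed.

Lemma sqr_normcE z : `|z| ^+ 2 = (sqnormc z)%:C.
Proof. by rewrite -add_Re2_Im2. Qed.

Lemma mulcJ z : z * z^* = (sqnormc z)%:C.
Proof. by rewrite -sqr_normc sqr_normcE. Qed.

Lemma ReD z w : Re (z + w) = Re z + Re w. Proof. by case: z w => ? ? []. Qed.
Lemma ImD z w : Im (z + w) = Im z + Im w. Proof. by case: z w => ? ? []. Qed.
Lemma ReB z w : Re (z - w) = Re z - Re w. Proof. by case: z w => ? ? []. Qed.
Lemma ImB z w : Im (z - w) = Im z - Im w. Proof. by case: z w => ? ? []. Qed.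
Lemma ReM z w : Re (z * w) = Re z * Re w - Im z * Im w.
Proof. by case: z w => ? ? []. Qed.
Lemma ImM z w : Im (z * w) = Re z * Im w + Im z * Re w.
Proof. by case: z w => a b [c e] /=; ring. Qed.

Lemma ReMJ z w : Re (z * w^*) = Re z * Re w + Im z * Im w.
Proof. by case: z w => a b [c e] /=; ring. Qed.

Lemma ImMJ z w : Im (z * w^*) = Im z * Re w - Re z * Im w.
Proof. by case: z w => a b [c e] /=; ring. Qed.

Lemma sqnormcM a z : sqnormc (a * z) = sqnormc a * sqnormc z.
Proof. rewrite /sqnormc ReM ImM; ring. Qed.

Lemma sqnormcD z w : sqnormc (z + w) <= 2 * sqnormc z + 2 * sqnormc w.
Proof.
rewrite /sqnormc ReD ImD.
have := sqr_ge0 (Re z - Re w); have := sqr_ge0 (Im z - Im w); nra.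
Qed.

Lemma normr_ReMJ_le z w : `|Re (z * w^*)| <= sqnormc z + sqnormc w.
Proof.
rewrite ReMJ /sqnormc; case: z w => a b [c e] /=.
have h1 := sqr_ge0 (a + c); have h2 := sqr_ge0 (b + e).
have h3 := sqr_ge0 (a - c); have h4 := sqr_ge0 (b - e).
by rewrite ler_norml; apply/andP; split; nra.
Qed.

Lemma normr_ImMJ_le z w : `|Im (z * w^*)| <= sqnormc z + sqnormc w.
Proof.
rewrite ImMJ /sqnormc; case: z w => a b [c e] /=.
have h1 := sqr_ge0 (b + c); have h2 := sqr_ge0 (a + e).
have h3 := sqr_ge0 (b - c); have h4 := sqr_ge0 (a - e).
by rewrite ler_norml; apply/andP; split; nra.
Qed.

Lemma normc_real (r : R) : `|r%:C| = `|r|%:C.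
Proof. by rewrite normc_def /= expr0n /= addr0 sqrtr_sqr. Qed.

Lemma cvg_sqnormc (v : nat -> R[i]) (l : R[i]) :
  (v : nat -> R[i]^o) @ \oo --> (l : R[i]^o) ->
  (fun n => sqnormc (v n)) @ \oo --> sqnormc l.
Proof.
move=> /cvg_norm vl.
have /cvgrPdist_le vl2 :
    (fun n => `|v n| * `|v n| : R[i]^o) @ \oo --> (`|l| * `|l| : R[i]^o).
  exact: cvgM.
apply/cvgrPdist_le => e e_gt0; have := vl2 e%:C; rewrite ltcR => /(_ e_gt0).
by apply: filterS => n; rewrite /= -!expr2 !sqr_normcE -rmorphB normc_real lecR.
Qed.

End SquaredModulus.

Section DualSpace.
Context {R : realType} {X : normedModType R[i]}.
Implicit Types (f g : X -> R[i]) (a : R[i]).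

Lemma conj_linear_comb a f g : conj_linear f -> conj_linear g ->
  conj_linear (Defs.dadd (Defs.dscale a f) g).
Proof.
move=> [fD fZ] [gD gZ]; rewrite /Defs.dadd /Defs.dscale.
by split=> [x y|b x]; rewrite ?fD ?gD ?fZ ?gZ; ring.
Qed.

Lemma conj_linear_dsub f g : conj_linear f -> conj_linear g ->
  conj_linear (Defs.dsub f g).
Proof.
move=> [fD fZ] [gD gZ]; rewrite /Defs.dsub.
by split=> [x y|b x]; rewrite ?fD ?gD ?fZ ?gZ; ring.
Qed.

Lemma in_dual0 : in_dual (fun _ : X => 0 : R[i]).
Proof.
by split; [split=> *; rewrite ?addr0 ?mulr0 | move=> x; exact: cvg_cst].
Qed.

Lemma in_dual_comb a f g : in_dual f -> in_dual g ->
  in_dual (Defs.dadd (Defs.dscale a f) g).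
Proof.
move=> [fL fC] [gL gC]; split; first exact: conj_linear_comb.
move=> x; rewrite /Defs.dadd /Defs.dscale.
by apply: cvgD; [apply: cvgM; [exact: cvg_cst | exact: fC] | exact: gC].
Qed.

Lemma dual_norm_le_apply x f M : conj_linear f -> dual_norm_le f M ->
  `|f x| <= M * (`|x| + 1).
Proof.
move=> [_ fZ] fM; have s_gt0 : 0 < `|x| + 1 := ltr_wpDl (normr_ge0 x) ltr01.
have y_le1 : `|(`|x| + 1)^-1 *: x| <= 1.
  by rewrite normrZ normfV (gtr0_norm s_gt0) ler_pdivrMl // mulr1 lerDl.
rewrite -{1}(scalerKV (lt0r_neq0 s_gt0) x) fZ -(RRe_real (gtr0_real s_gt0)).
rewrite conjc_real RRe_real ?gtr0_real // normrM (gtr0_norm s_gt0).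
by rewrite [M * _]mulrC ler_pM2l //; exact: fM.
Qed.

Lemma dual_cvg_pointwise (F : nat -> X -> R[i]) f :
  (forall n, conj_linear (F n)) -> conj_linear f -> dual_cvg F f ->
  forall x, (fun n => F n x : R[i]^o) @ \oo --> (f x : R[i]^o).
Proof.
move=> FL fL Ff x; apply/cvgrPdist_le => e e_gt0.
have s_gt0 : 0 < `|x| + 1 := ltr_wpDl (normr_ge0 x) ltr01.
have [N FN] := Ff (e / (`|x| + 1)) (divr_gt0 e_gt0 s_gt0).
exists N => // n /FN Fn; rewrite distrC.
have := dual_norm_le_apply x _ _ (conj_linear_dsub _ _ (FL n) fL) Fn.
by rewrite divfK ?lt0r_neq0.
Qed.

End DualSpace.

Section SquareIntegrable.
Context {R : realType} {d : measure_display} {T : measurableType d}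
  (mu : {measure set T -> \bar R}).
Implicit Types (h p q : T -> R[i]) (a : R[i]).
Local Open Scope complex_scope.

Lemma integrable_EFinZ (k : R) (f : T -> R) :
  mu.-integrable setT (EFin \o f) ->
  mu.-integrable setT (EFin \o (fun w => k * f w)).
Proof. exact: integrableZl. Qed.

Lemma integrable_EFinD (f g : T -> R) :
  mu.-integrable setT (EFin \o f) -> mu.-integrable setT (EFin \o g) ->
  mu.-integrable setT (EFin \o (fun w => f w + g w)).
Proof. exact: integrableD. Qed.

Lemma integrable_EFinB (f g : T -> R) :
  mu.-integrable setT (EFin \o f) -> mu.-integrable setT (EFin \o g) ->
  mu.-integrable setT (EFin \o (fun w => f w - g w)).
Proof. exact: integrableB. Qed.

Lemma cmeasurableD p q : cmeasurable p -> cmeasurable q ->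
  cmeasurable (fun w => p w + q w).
Proof.
move=> [pRe pIm] [qRe qIm]; split.
- by under eq_fun do rewrite ReD; exact: measurable_funD.
- by under eq_fun do rewrite ImD; exact: measurable_funD.
Qed.

Lemma cmeasurableB p q : cmeasurable p -> cmeasurable q ->
  cmeasurable (fun w => p w - q w).
Proof.
move=> [pRe pIm] [qRe qIm]; split.
- by under eq_fun do rewrite ReB; exact: measurable_funB.
- by under eq_fun do rewrite ImB; exact: measurable_funB.
Qed.

Lemma cmeasurableMl a p : cmeasurable p -> cmeasurable (fun w => a * p w).
Proof.
move=> [pRe pIm]; split.
- under eq_fun do rewrite ReM.
  by apply: measurable_funB; apply: measurable_funM => //;
    exact: measurable_cst.
- under eq_fun do rewrite ImM.
  by apply: measurable_funD; apply: measurable_funM => //;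
    exact: measurable_cst.
Qed.

Lemma measurable_sqnormc h : cmeasurable h ->
  measurable_fun setT (fun w => sqnormc (h w)).
Proof. by move=> [hRe hIm]; apply: measurable_funD; exact: measurable_funX. Qed.

Definition square_integrable h :=
  cmeasurable h /\ mu.-integrable setT (EFin \o (fun w => sqnormc (h w))).

Lemma square_integrableP h : cmeasurable h ->
  (\int[mu]_w (sqnormc (h w))%:E < +oo)%E -> square_integrable h.
Proof.
move=> mh h_lty; split=> //; apply/integrableP; split.
  exact/measurable_EFinP/measurable_sqnormc.
by under eq_integral do rewrite /= ger0_norm ?sqnormc_ge0 //.
Qed.

Lemma square_integrable_lty h : square_integrable h ->
  (\int[mu]_w (sqnormc (h w))%:E < +oo)%E.
Proof. by case=> _; exact: integrable_lty. Qed.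

Lemma integral_sqnormcE h : square_integrable h ->
  (\int[mu]_w (sqnormc (h w))%:E)%E = (\int[mu]_w sqnormc (h w))%:E.
Proof. by case=> _ hi; rewrite /Rintegral fineK // integrable_fin_num. Qed.

Lemma square_integrableD p q : square_integrable p -> square_integrable q ->
  square_integrable (fun w => p w + q w).
Proof.
move=> [mp ip] [mq iq]; split; first exact: cmeasurableD.
apply: (@le_integrable _ _ _ mu setT measurableT _
  (EFin \o (fun w => 2 * sqnormc (p w) + 2 * sqnormc (q w)))).
- exact/measurable_EFinP/measurable_sqnormc/cmeasurableD.
- move=> w _; rewrite /= lee_fin !ger0_norm ?sqnormcD ?sqnormc_ge0 //.
  by rewrite addr_ge0 // mulr_ge0 // sqnormc_ge0.
- by apply: integrable_EFinD; exact: integrable_EFinZ.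
Qed.

Lemma square_integrableMl a p : square_integrable p ->
  square_integrable (fun w => a * p w).
Proof.
move=> [mp ip]; split; first exact: cmeasurableMl.
by under eq_fun do rewrite sqnormcM; exact: integrable_EFinZ.
Qed.

Lemma square_integrableB p q : square_integrable p -> square_integrable q ->
  square_integrable (fun w => p w - q w).
Proof.
move=> sp sq; have := square_integrableD _ _ sp (square_integrableMl (-1) _ sq).
by under eq_fun do rewrite mulN1r.
Qed.

Lemma square_integrable_of_sub h g : square_integrable h ->
  square_integrable (fun w => h w - g w) -> square_integrable g.
Proof.
move=> sh shg; have := square_integrableB _ _ sh shg.
by under eq_fun do rewrite opprB addrC subrK.
Qed.

Lemma cintegrableMl a p : cintegrable mu p -> cintegrable mu (fun w => a * p w).
Proof.
move=> [pRe pIm]; split.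
- under eq_fun do rewrite ReM.
  by apply: integrable_EFinB; exact: integrable_EFinZ.
- under eq_fun do rewrite ImM.
  by apply: integrable_EFinD; exact: integrable_EFinZ.
Qed.

Lemma cintegralD p q : cintegrable mu p -> cintegrable mu q ->
  cintegral mu (fun w => p w + q w) = cintegral mu p + cintegral mu q.
Proof.
move=> [pRe pIm] [qRe qIm]; rewrite /cintegral.
under eq_Rintegral do rewrite ReD.
under [X in Complex _ X]eq_Rintegral do rewrite ImD.
by rewrite !RintegralD.
Qed.

Lemma cintegralMl a p : cintegrable mu p ->
  cintegral mu (fun w => a * p w) = a * cintegral mu p.
Proof.
move=> [pRe pIm]; rewrite /cintegral.
under eq_Rintegral do rewrite ReM.
under [X in Complex _ X]eq_Rintegral do rewrite ImM.
rewrite RintegralB ?RintegralD ?RintegralZl //; try exact: integrable_EFinZ.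
by case: a.
Qed.

Lemma cintegrable_mulJ h1 h2 : square_integrable h1 -> square_integrable h2 ->
  cintegrable mu (fun w => h1 w * (h2 w)^*).
Proof.
move=> [[h1Re h1Im] i1] [[h2Re h2Im] i2].
have bound (f : T -> R) : measurable_fun setT f ->
    (forall w, `|f w| <= sqnormc (h1 w) + sqnormc (h2 w)) ->
    mu.-integrable setT (EFin \o f).
  move=> mf fb; apply: (@le_integrable _ _ _ mu setT measurableT _
    (EFin \o (fun w => sqnormc (h1 w) + sqnormc (h2 w)))).
  - exact/measurable_EFinP.
  - move=> w _; rewrite /= lee_fin [leRHS]ger0_norm ?fb //.
    by rewrite addr_ge0 // sqnormc_ge0.
  - exact: integrable_EFinD.
split; apply: bound => [|w]; rewrite ?normr_ReMJ_le ?normr_ImMJ_le //.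
- under eq_fun do rewrite ReMJ.
  by apply: measurable_funD; exact: measurable_funM.
- under eq_fun do rewrite ImMJ.
  by apply: measurable_funB; exact: measurable_funM.
Qed.

Lemma cintegral_mulJ h :
  cintegral mu (fun w => h w * (h w)^*) = (\int[mu]_w sqnormc (h w))%:C.
Proof.
rewrite /cintegral; under eq_Rintegral do rewrite mulcJ.
under [X in Complex _ X]eq_Rintegral do rewrite mulcJ /=.
by rewrite Rintegral_cst // mul0r.
Qed.

Lemma cintegral_mulJ_ge0 h : 0 <= cintegral mu (fun w => h w * (h w)^*).
Proof.
by rewrite cintegral_mulJ ler0c Rintegral_ge0 // => w _; exact: sqnormc_ge0.
Qed.

Lemma le_normc_cintegral_mulJ h (e : R) : square_integrable h ->
  (`|cintegral mu (fun w => h w * (h w)^*)| <= e%:C) =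
  (\int[mu]_w (sqnormc (h w))%:E <= e%:E)%E.
Proof.
move=> sh; rewrite ger0_norm ?cintegral_mulJ_ge0 //.
by rewrite cintegral_mulJ lecR integral_sqnormcE // lee_fin.
Qed.

Lemma limn_einf_le (u : nat -> \bar R) (N : nat) (e : \bar R) :
  (forall m, (N <= m)%N -> (u m <= e)%E) -> (limn_einf u <= e)%E.
Proof.
move=> ue; rewrite limn_einf_lim; apply: lime_le; first exact: is_cvg_einfs.
exists N => // n /= Nn; apply: le_trans (ue _ Nn).
by apply: ereal_inf_lbound; exists n => /=.
Qed.

Lemma fatou_sqnormc_cauchy (H : nat -> T -> R[i]) (g : T -> R[i]) :
  (forall n, cmeasurable (H n)) ->
  (forall w, (fun n => H n w : R[i]^o) @ \oo --> (g w : R[i]^o)) ->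
  (forall e : R, 0 < e -> exists N, forall n m, (N <= n)%N -> (N <= m)%N ->
     (\int[mu]_w (sqnormc (H n w - H m w))%:E <= e%:E)%E) ->
  forall e : R, 0 < e -> exists N, forall n, (N <= n)%N ->
     (\int[mu]_w (sqnormc (H n w - g w))%:E <= e%:E)%E.
Proof.
move=> mH Hg cauchy e e_gt0; have [N HN] := cauchy e e_gt0.
exists N => n Nn.
have lim_m w : (sqnormc (H n w - g w))%:E =
    limn_einf (fun m => (sqnormc (H n w - H m w))%:E).
  apply/esym/(cvg_limn_einf_sup _).1; apply: cvg_EFin; first exact: nearW.
  by apply: cvg_sqnormc; apply: cvgB; [exact: cvg_cst | exact: Hg].
under eq_integral do rewrite lim_m.
apply: le_trans (@fatou _ _ _ mu setT measurableT
    (fun m w => (sqnormc (H n w - H m w))%:E) _ _)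
  (limn_einf_le _ N _ (HN n ^~ Nn)).
- by move=> m; apply/measurable_EFinP/measurable_sqnormc/cmeasurableB.
- by move=> m w _; rewrite lee_fin sqnormc_ge0.
Qed.

End SquareIntegrable.

Section CovarianceForm.
Context {R : realType} {X : normedModType R[i]} {d : measure_display}
  {T : measurableType d} (mu : {measure set T -> \bar R}) (xi : T -> X).
Local Open Scope complex_scope.

Definition covariance_domain : set (X -> R[i]) :=
  [set f | in_dual f /\ square_integrable mu (fun w => f (xi w))].

Definition covariance_form (f g : X -> R[i]) : R[i] :=
  cintegral mu (fun w => f (xi w) * (g (xi w))^*).

Lemma covariance_domain_subspace : dual_subspace covariance_domain.
Proof.
split; first by move=> f [].
split.
  split; first exact: in_dual0.
  split; first by split; exact: measurable_cst.
  rewrite (_ : _ \o _ = cst 0%E); first exact: integrable0.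
  by apply/funext => w /=; rewrite /sqnormc /= expr0n /= addr0.
move=> a f g [fd fs] [gd gs]; split; first exact: in_dual_comb.
by apply: square_integrableD => //; exact: square_integrableMl.
Qed.

Lemma covariance_form_ge0 : positive_on covariance_domain covariance_form.
Proof. by move=> f _; exact: cintegral_mulJ_ge0. Qed.

Lemma covariance_form_sesquilinear :
  sesquilinear_on covariance_domain covariance_form.
Proof.
have int f g : covariance_domain f -> covariance_domain g ->
    cintegrable mu (fun w => f (xi w) * (g (xi w))^*).
  by move=> [_ fs] [_ gs]; exact: cintegrable_mulJ.
split=> a f g h Df Dg Dh; rewrite /covariance_form /Defs.dadd /Defs.dscale.
- have [fh gh] := (int _ _ Df Dh, int _ _ Dg Dh).
  rewrite -(cintegralMl _ _ _ fh).
  rewrite -(cintegralD _ _ _ (cintegrableMl _ _ _ fh) gh).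
  by congr cintegral; apply/funext => w; ring.
- have [hf hg] := (int _ _ Dh Df, int _ _ Dh Dg).
  rewrite -(cintegralMl _ _ _ hf).
  rewrite -(cintegralD _ _ _ (cintegrableMl _ _ _ hf) hg).
  by congr cintegral; apply/funext => w; rewrite rmorphD rmorphM /=; ring.
Qed.

Hypothesis xi_weakly_measurable :
  forall f : X -> R[i], in_dual f -> cmeasurable (fun w => f (xi w)).

Lemma covariance_form_closed : closed_form_on covariance_domain covariance_form.
Proof.
move=> F f DF fd Ff cauchy.
have sF n : square_integrable mu (fun w => F n (xi w)) := (DF n).2.
have Fxi w : (fun n => F n (xi w) : R[i]^o) @ \oo --> (f (xi w) : R[i]^o).
  exact: dual_cvg_pointwise (fun n => (DF n).1.1) fd.1 Ff (xi w).
have cauchy_sqnormc (e : R) : 0 < e -> exists N, forall n m,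
    (N <= n)%N -> (N <= m)%N ->
    (\int[mu]_w (sqnormc (F n (xi w) - F m (xi w)))%:E <= e%:E)%E.
  move=> e_gt0; have [|N HN] := cauchy e%:C; first by rewrite ltcR.
  exists N => n m Nn Nm; rewrite -le_normc_cintegral_mulJ; first exact: HN.
  exact: square_integrableB.
have lim_sqnormc :=
  fatou_sqnormc_cauchy mu _ _ (fun n => (sF n).1) Fxi cauchy_sqnormc.
have [N0 HN0] := lim_sqnormc 1 ltr01.
have sf : square_integrable mu (fun w => f (xi w)).
  apply: (square_integrable_of_sub _ _ _ (sF N0)).
  apply: square_integrableP.
    exact: cmeasurableB _ _ (sF N0).1 (xi_weakly_measurable _ fd).
  exact: le_lt_trans (HN0 N0 (leqnn _)) (ltey _).
split=> // e e_gt0; rewrite -(RRe_real (gtr0_real e_gt0)).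
have Re_gt0 : 0 < Re e by rewrite -ltcR RRe_real ?gtr0_real.
have [N HN] := lim_sqnormc _ Re_gt0; exists N => n Nn.
by rewrite le_normc_cintegral_mulJ; [exact: HN | exact: square_integrableB].
Qed.

End CovarianceForm.

Theorem theorem7 (R : realType) (X : completeNormedModType R[i])
  (d : measure_display) (Omega : measurableType d) (P : probability Omega R)
  (xi : Omega -> X) :
  @reflexive_space R X ->
  (* xi is weakly measurable *)
  (forall f : X -> R[i], in_dual f -> cmeasurable (fun w => f (xi w))) ->
  (* xi has a weak (Pettis) expectation, equal to 0 *)
  (forall f : X -> R[i], in_dual f ->
     cintegrable P (fun w => f (xi w)) /\ cintegral P (fun w => f (xi w)) = 0) ->
  let D := [set f : X -> R[i] | in_dual f /\
              (\int[P]_w (complex.Re (`|f (xi w)| ^+ 2))%:E < +oo)%E] in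
  (* D is dense in X^* *)
  (forall f : X -> R[i], in_dual f -> forall e : R[i], 0 < e ->
     exists g, D g /\ dual_norm_le (dsub f g) e) ->
  let t := fun f g : X -> R[i] =>
             cintegral P (fun w => f (xi w) * conjc (g (xi w))) in
  dual_subspace D /\ positive_on D t /\ sesquilinear_on D t /\
  closed_form_on D t.
Proof.
move=> _ xi_meas _ D _ t.
have -> : D = covariance_domain P xi.
  apply/seteqP; split=> f [fd fs]; split=> //.
    apply: square_integrableP; first exact: xi_meas.
    by under eq_integral do rewrite -Re_sqr_normc.
  by under eq_integral do rewrite Re_sqr_normc; exact: square_integrable_lty.
split; first exact: covariance_domain_subspace.
split; first exact: covariance_form_ge0.
split; first exact: covariance_form_sesquilinear.
exact: covariance_form_closed.
Qed.
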